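(* Let $R$ be a commutative semiring, $v:R\to M$ a surjective m-valuation with support $\mathfrak q:=v^{-1}(0)$, and $U^0(v)$ the supertropical monoid constructed below. (i) The map $\varphi_v^0:R\to U^0(v)$ with $\varphi_v^0(a)=a$ for $a\in R\setminus\mathfrak q$ and $\varphi_v^0(a)=0_M$ for $a\in\mathfrak q$ is a surjective m-supervaluation covering $v$. (ii) $\varphi_v^0$ dominates every other m-supervaluation covering $v$.
   Context: A bipotent semiring $M$ is a commutative monoid with absorbing $0$ and a total order compatible with multiplication with $0$ least; $x+y=\max(x,y)$. An m-valuation on a semiring $R$ is a multiplicative map $v:R\to M$ to a bipotent semiring with $v(0)=0$, $v(1)=1$, $v(a+b)\le\max(v(a),v(b))$. A supertropical monoid is a commutative monoid $U$ with absorbing $0$ and idempotent $e$ with $ex=0\Rightarrow x=0$ and a total order on $eU$ making it a bipotent semiring. An m-supervaluation is a map $\varphi:R\to U$ to a supertropical monoid with $\varphi(0)=0$, $\varphi(1)=1$, $\varphi(ab)=\varphi(a)\varphi(b)$, $e\varphi(a+b)\le\max(e\varphi(a),e\varphi(b))$; it covers $v$ if $eU=M$ and $e\varphi=v$; it is surjective if $U=\varphi(R)\cup e\varphi(R)$. For m-supervaluations $\varphi:R\to U$, $\psi:R\to V$, $\varphi$ dominates $\psi$ if for all $a,b\in R$: $\varphi(a)=\varphi(b)\Rightarrow\psi(a)=\psi(b)$; $e\varphi(a)\le e\varphi(b)\Rightarrow e\psi(a)\le e\psi(b)$; $\varphi(a)\in eU\Rightarrow\psi(a)\in eV$. Construction: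 $U^0(v)$ is the disjoint union $(R\setminus\mathfrak q)\sqcup M$ with multiplication $x\odot y=xy$ (product in $R$) if $x,y,xy\in R\setminus\mathfrak q$; $x\odot y=0_M$ if $x,y\in R\setminus\mathfrak q$, $xy\in\mathfrak q$; $x\odot y=v(x)y$ if $x\in R\setminus\mathfrak q$, $y\in M$ (and symmetrically); $x\odot y=xy$ (product in $M$) if $x,y\in M$; unit $1_R$, absorbing element $0_M$, distinguished idempotent $e:=1_M$, with the given ordering on $eU^0(v)=M$. *)

From HB Require Import structures.
From mathcomp Require Import all_boot all_order all_algebra.
Set Implicit Arguments. Unset Strict Implicit. Unset Printing Implicit Defensive.
Import GRing.Theory.
Local Open Scope ring_scope.

(** * Bipotent semirings (given as totally ordered commutative monoids with
    absorbing least element 0; addition is x + y = max x y). *)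
Record bip_data := BipData {
  Mcar : eqType;
  Mmul : Mcar -> Mcar -> Mcar;
  Mone : Mcar;
  Mzero : Mcar;
  Mle : Mcar -> Mcar -> bool }.

Definition Mmax (M : bip_data) (x y : Mcar M) : Mcar M :=
  if Mle x y then y else x.

Definition is_bipotent (M : bip_data) : Prop :=
  (forall x y z : Mcar M, Mmul x (Mmul y z) = Mmul (Mmul x y) z) /\
  (forall x y : Mcar M, Mmul x y = Mmul y x) /\
  (forall x : Mcar M, Mmul (Mone M) x = x) /\
  (forall x : Mcar M, Mmul (Mzero M) x = Mzero M) /\
  (forall x : Mcar M, Mle x x) /\
  (forall x y : Mcar M, Mle x y -> Mle y x -> x = y) /\
  (forall x y z : Mcar M, Mle x y -> Mle y z -> Mle x z) /\
  (forall x y : Mcar M, Mle x y || Mle y x) /\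
  (forall x y z : Mcar M, Mle x y -> Mle (Mmul x z) (Mmul y z)) /\
  (forall x : Mcar M, Mle (Mzero M) x).

Definition is_mvaluation (R : comPzSemiRingType) (M : bip_data) (v : R -> Mcar M)
  : Prop :=
  v 0 = Mzero M /\ v 1 = Mone M /\
  (forall a b : R, v (a * b) = Mmul (v a) (v b)) /\
  (forall a b : R, Mle (v (a + b)) (Mmax (v a) (v b))).

Definition surjective_val (R : comPzSemiRingType) (M : bip_data) (v : R -> Mcar M)
  : Prop := forall m : Mcar M, exists a : R, v a = m.

Record st_data := StData {
  Ucar : Type;
  Umul : Ucar -> Ucar -> Ucar;
  Uone : Ucar;
  Uzero : Ucar;
  Ue : Ucar;
  Ule : Ucar -> Ucar -> bool }.

Definition inGhost (U : st_data) (x : Ucar U) : Prop := exists y, x = Umul (Ue U) y.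

Definition Umax (U : st_data) (x y : Ucar U) : Ucar U :=
  if Ule x y then y else x.

Definition is_supertropical (U : st_data) : Prop :=
  (forall x y z : Ucar U, Umul x (Umul y z) = Umul (Umul x y) z) /\
  (forall x y : Ucar U, Umul x y = Umul y x) /\
  (forall x : Ucar U, Umul (Uone U) x = x) /\
  (forall x : Ucar U, Umul (Uzero U) x = Uzero U) /\
  Umul (Ue U) (Ue U) = Ue U /\
  (forall x : Ucar U, Umul (Ue U) x = Uzero U -> x = Uzero U) /\
  (forall x : Ucar U, inGhost x -> Ule x x) /\
  (forall x y : Ucar U, inGhost x -> inGhost y -> Ule x y -> Ule y x -> x = y) /\
  (forall x y z : Ucar U, inGhost x -> inGhost y -> inGhost z ->
     Ule x y -> Ule y z -> Ule x z) /\
  (forall x y : Ucar U, inGhost x -> inGhost y -> Ule x y || Ule y x) /\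
  (forall x y z : Ucar U, inGhost x -> inGhost y -> inGhost z ->
     Ule x y -> Ule (Umul x z) (Umul y z)) /\
  (forall x : Ucar U, inGhost x -> Ule (Uzero U) x).

Definition is_msupervaluation (R : comPzSemiRingType) (U : st_data)
  (phi : R -> Ucar U) : Prop :=
  phi 0 = Uzero U /\ phi 1 = Uone U /\
  (forall a b : R, phi (a * b) = Umul (phi a) (phi b)) /\
  (forall a b : R, Ule (Umul (Ue U) (phi (a + b)))
                       (Umax (Umul (Ue U) (phi a)) (Umul (Ue U) (phi b)))).

Definition surjective_sv (R : comPzSemiRingType) (U : st_data) (phi : R -> Ucar U)
  : Prop := forall x : Ucar U, exists a : R, x = phi a \/ x = Umul (Ue U) (phi a).

(** phi covers v: eU = M (as bipotent semirings, via an identification iota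
    of M with eU), and e phi = v. *)
Definition covers (R : comPzSemiRingType) (U : st_data) (M : bip_data)
  (phi : R -> Ucar U) (v : R -> Mcar M) : Prop :=
  exists iota : Mcar M -> Ucar U,
    injective iota /\
    (forall x : Ucar U, inGhost x <-> exists m, x = iota m) /\
    (forall m n, iota (Mmul m n) = Umul (iota m) (iota n)) /\
    iota (Mone M) = Ue U /\ iota (Mzero M) = Uzero U /\
    (forall m n, Mle m n = Ule (iota m) (iota n)) /\
    (forall a : R, Umul (Ue U) (phi a) = iota (v a)).

Definition dominates (R : comPzSemiRingType) (U V : st_data)
  (phi : R -> Ucar U) (psi : R -> Ucar V) : Prop :=
  forall a b : R,
    (phi a = phi b -> psi a = psi b) /\
    (Ule (Umul (Ue U) (phi a)) (Umul (Ue U) (phi b)) ->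
       Ule (Umul (Ue V) (psi a)) (Umul (Ue V) (psi b))) /\
    (inGhost (phi a) -> inGhost (psi a)).

Section U0.
Variables (R : comPzSemiRingType) (M : bip_data) (v : R -> Mcar M).

Definition nonsupp := {a : R | v a != Mzero M}.

Definition U0car : Type := (nonsupp + Mcar M)%type.

Definition phi0 (a : R) : U0car :=
  match @insub R (fun a => v a != Mzero M) nonsupp a with
  | Some s => inl s
  | None => inr (Mzero M)
  end.

Definition U0mul (x y : U0car) : U0car :=
  match x, y with
  | inl a, inl b => phi0 (val a * val b)
  | inl a, inr m => inr (Mmul (v (val a)) m)
  | inr m, inl b => inr (Mmul m (v (val b)))
  | inr m, inr n => inr (Mmul m n)
  end.

Definition U0le (x y : U0car) : bool :=
  match x, y with
  | inr m, inr n => Mle m n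
  | _, _ => false
  end.

Definition U0 : st_data :=
  StData U0mul (phi0 1) (inr (Mzero M)) (inr (Mone M)) U0le.

End U0.

From mathcomp Require Import all_boot all_order all_algebra.
Local Open Scope ring_scope.
Import GRing.Theory.

(* In U^0(v) an element a of R outside the support q is kept as itself, and
   the ghost part is a copy of M, so phi0 forgets nothing about a except when
   v a = 0.  A supervaluation psi covering v must send q to 0, because
   e psi(a) = v(a) = 0 and e is a non-zero-divisor; hence phi0 a = phi0 b
   forces psi a = psi b, while comparisons of ghost values are comparisons
   of v on both sides. *)

Section Bipotent.
Context {M : bip_data} (hM : is_bipotent M).

Lemma MmulrA (x y z : Mcar M) : Mmul x (Mmul y z) = Mmul (Mmul x y) z.
Proof. by case: hM. Qed.

Lemma MmulrC (x y : Mcar M) : Mmul x y = Mmul y x.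
Proof. by case: hM => _ []. Qed.

Lemma Mmul1r (x : Mcar M) : Mmul (Mone M) x = x.
Proof. by case: hM => _ [_ []]. Qed.

Lemma Mmul0r (x : Mcar M) : Mmul (Mzero M) x = Mzero M.
Proof. by case: hM => _ [_ [_ []]]. Qed.

Lemma Mmulr0 (x : Mcar M) : Mmul x (Mzero M) = Mzero M.
Proof. by rewrite MmulrC Mmul0r. Qed.

End Bipotent.

Section U0Theory.
Variables (R : comPzSemiRingType) (M : bip_data) (v : R -> Mcar M).
Hypotheses (hM : is_bipotent M) (hv : is_mvaluation v).

Local Notation ghost m := (@inr (nonsupp v) (Mcar M) m).

Lemma mval0 : v 0 = Mzero M.
Proof. by case: hv. Qed.

Lemma mval1 : v 1 = Mone M.
Proof. by case: hv => _ []. Qed.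

Lemma mvalM (a b : R) : v (a * b) = Mmul (v a) (v b).
Proof. by case: hv => _ [_ []]. Qed.

Lemma phi0_nonsupp {a : R} (h : v a != Mzero M) : phi0 v a = inl (exist _ a h).
Proof. by rewrite /phi0 insubT. Qed.

Lemma phi0_supp {a : R} : v a = Mzero M -> phi0 v a = ghost (Mzero M).
Proof. by move=> h; rewrite /phi0 insubF // h eqxx. Qed.

Lemma phi0_val (s : nonsupp v) : phi0 v (val s) = inl s.
Proof. by case: s => a h; rewrite (phi0_nonsupp h). Qed.

Lemma phi0_ghost {a : R} {m : Mcar M} : phi0 v a = ghost m -> v a = Mzero M.
Proof.
by case: (eqVneq (v a) (Mzero M)) => // h; rewrite (phi0_nonsupp h).
Qed.

Lemma U0mul_phi0_ghost (a : R) (m : Mcar M) :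
  U0mul (phi0 v a) (ghost m) = ghost (Mmul (v a) m).
Proof.
case: (eqVneq (v a) (Mzero M)) => h; last by rewrite (phi0_nonsupp h).
by rewrite phi0_supp //= h (Mmul0r hM).
Qed.

Lemma U0mul_ghost_phi0 (a : R) (m : Mcar M) :
  U0mul (ghost m) (phi0 v a) = ghost (Mmul m (v a)).
Proof.
case: (eqVneq (v a) (Mzero M)) => h; last by rewrite (phi0_nonsupp h).
by rewrite phi0_supp //= h (Mmulr0 hM).
Qed.

Lemma U0_e_phi0 (a : R) : Umul (Ue (U0 v)) (phi0 v a) = ghost (v a).
Proof. by rewrite -(Mmul1r hM (v a)); exact: U0mul_ghost_phi0. Qed.

Lemma phi0M (a b : R) : phi0 v (a * b) = U0mul (phi0 v a) (phi0 v b).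
Proof.
case: (eqVneq (v a) (Mzero M)) => ha.
  rewrite (phi0_supp ha) U0mul_ghost_phi0 (Mmul0r hM).
  by rewrite phi0_supp // mvalM ha (Mmul0r hM).
case: (eqVneq (v b) (Mzero M)) => hb.
  rewrite (phi0_supp hb) U0mul_phi0_ghost (Mmulr0 hM).
  by rewrite phi0_supp // mvalM hb (Mmulr0 hM).
by rewrite (phi0_nonsupp ha) (phi0_nonsupp hb).
Qed.

Lemma U0mul1 (x : U0car v) : U0mul (phi0 v 1) x = x.
Proof.
case: x => [s|m]; first by rewrite -phi0_val -phi0M mul1r.
by rewrite U0mul_phi0_ghost mval1 (Mmul1r hM).
Qed.

Lemma U0mulC (x y : U0car v) : U0mul x y = U0mul y x.
Proof.
by case: x y => [a|m] [b|n] /=; [rewrite mulrC | rewrite (MmulrC hM)..].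
Qed.

Lemma U0mulA (x y z : U0car v) : U0mul x (U0mul y z) = U0mul (U0mul x y) z.
Proof.
case: x y z => [a|m] [b|n] [c|p]; rewrite -?phi0_val;
  rewrite -?phi0M ?U0mul_phi0_ghost ?U0mul_ghost_phi0 -?phi0M
    ?U0mul_phi0_ghost ?U0mul_ghost_phi0 ?mulrA ?mvalM //=.
all: by congr inr; exact: (MmulrA hM).
Qed.

Lemma U0_ghostP (x : U0car v) : inGhost (U:=U0 v) x <-> exists m, x = ghost m.
Proof.
split; first by case=> [[y|y] ->]; eexists.
by case=> m ->; exists (ghost m); rewrite /= (Mmul1r hM).
Qed.

Lemma U0_supertropical : is_supertropical (U0 v).
Proof.
have [_ [_ [_ [_ [lerr [le_anti [le_trans [le_total [lerM le0r]]]]]]]]] := hM.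
split; first exact: U0mulA.
split; first exact: U0mulC.
split; first exact: U0mul1.
split; first by case=> [b|n] /=; rewrite (Mmul0r hM).
split; first by rewrite /= (Mmul1r hM).
split.
  case=> [s|n] /=; last by rewrite (Mmul1r hM).
  by rewrite (Mmul1r hM) => -[h]; move: (valP s); rewrite /= h eqxx.
split; first by move=> x /U0_ghostP [m ->]; exact: lerr.
split.
  move=> x y /U0_ghostP [m ->] /U0_ghostP [n ->] /= ? ?.
  by congr inr; exact: le_anti.
split.
  by move=> x y z /U0_ghostP [m ->] /U0_ghostP [n ->] /U0_ghostP [p ->];
    exact: le_trans.
split.
  by move=> x y /U0_ghostP [m ->] /U0_ghostP [n ->]; exact: le_total.
split.
  by move=> x y z /U0_ghostP [m ->] /U0_ghostP [n ->] /U0_ghostP [p ->];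
    exact: lerM.
by move=> x /U0_ghostP [m ->]; exact: le0r.
Qed.

Lemma phi0_msupervaluation : is_msupervaluation (U:=U0 v) (phi0 v).
Proof.
split; first exact/phi0_supp/mval0.
split; first by [].
split; first exact: phi0M.
move=> a b; rewrite !U0_e_phi0 /Umax /=.
by case: hv => _ [_ [_ /(_ a b)]]; rewrite /Mmax; case: (Mle (v a) (v b)).
Qed.

Lemma phi0_surjective : surjective_val v -> surjective_sv (U:=U0 v) (phi0 v).
Proof.
move=> hsurj [s|m]; first by exists (val s); left; rewrite phi0_val.
by have [a <-] := hsurj m; exists a; right; rewrite U0_e_phi0.
Qed.

Lemma phi0_covers : covers (U:=U0 v) (phi0 v) v.
Proof.
exists inr; split; first by move=> m n [].
split; first exact: U0_ghostP.
do 4 split => //.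
exact: U0_e_phi0.
Qed.

Lemma covers_supp_zero {V : st_data} {psi : R -> Ucar V} :
  is_supertropical V -> covers psi v ->
  forall a, v a = Mzero M -> psi a = Uzero V.
Proof.
move=> [_ [_ [_ [_ [_ [Ve0 _]]]]]] [io [_ [_ [_ [_ [io0 [_ ioE]]]]]]] a h.
by apply: Ve0; rewrite ioE h io0.
Qed.

Lemma phi0_dominates (V : st_data) (psi : R -> Ucar V) :
  is_supertropical V -> covers psi v -> dominates (U:=U0 v) (phi0 v) psi.
Proof.
move=> hV hcov; have psi0 := covers_supp_zero hV hcov.
have [io [_ [_ [_ [_ [_ [ioL ioE]]]]]]] := hcov.
move=> a b; split; [|split].
- case: (eqVneq (v a) (Mzero M)) => ha.
    rewrite (phi0_supp ha) => /esym/phi0_ghost hb.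
    by rewrite !psi0.
  rewrite (phi0_nonsupp ha); case: (eqVneq (v b) (Mzero M)) => hb.
    by rewrite (phi0_supp hb).
  by rewrite (phi0_nonsupp hb) => -[->].
- by rewrite !U0_e_phi0 /= !ioE -ioL.
- move=> /U0_ghostP [m /phi0_ghost /psi0 ->].
  have [_ [VmulC [_ [Vmul0 _]]]] := hV.
  by exists (Uzero V); rewrite VmulC Vmul0.
Qed.

End U0Theory.

Theorem theorem6p4 (R : comPzSemiRingType) (M : bip_data) (v : R -> Mcar M)
  (hM : is_bipotent M) (hv : is_mvaluation v) (hsurj : surjective_val v) :
  (is_supertropical (U0 v) /\
   is_msupervaluation (U:=U0 v) (phi0 v) /\
   surjective_sv (U:=U0 v) (phi0 v) /\
   covers (U:=U0 v) (phi0 v) v) /\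
  (forall (V : st_data) (psi : R -> Ucar V),
     is_supertropical V -> is_msupervaluation psi -> covers psi v ->
     dominates (U:=U0 v) (phi0 v) psi).
Proof.
(* Domination only uses that psi covers v, not that it is multiplicative. *)
split; last by move=> V psi hV _; exact: phi0_dominates.
split; first exact: U0_supertropical.
split; first exact: phi0_msupervaluation.
split; first exact: phi0_surjective.
exact: phi0_covers.
Qed.
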